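(* Let $G$ be a finite solvable group of derived length $\ell \geq 1$, and let $f : \mathbb{Z}_{\geq 1} \to \mathbb{R}$ be a function such that $ab_k(G) \leq f(k)$ for all $k \geq 1$. Then $|G| \leq F(\ell, f)$ for some quantity $F(\ell,f)$ depending only on $\ell$ and $f$ (and not on $G$).
   Context: For a group $G$, $G' = [G,G]$ is the commutator subgroup, and the abelianization growth is $ab_k(G) = \sup\{ |H : H'| : H \leqslant G, \ |G:H| \leq k\}$. *)

From mathcomp Require Import all_boot all_fingroup all_solvable.
From Stdlib Require Import Reals.
Set Implicit Arguments. Unset Strict Implicit. Unset Printing Implicit Defensive.
Local Open Scope group_scope.

Definition derived_length (gT : finGroupType) (G : {set gT}) (l : nat) : bool :=
  (G^`(l) == 1) && [forall n : 'I_l, G^`(n) != 1].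

(* ab_k(G) = sup { |H : H'| : H <= G, |G : H| <= k } (a max over a finite,
   nonempty (for k >= 1, H = G) family). *)
Definition ab_k (gT : finGroupType) (G : {group gT}) (k : nat) : nat :=
  \max_(H : {group gT} | (H \subset G) && (#|G : H| <= k)%N) #|H : H^`(1)|.

From mathcomp Require Import all_boot all_fingroup all_solvable.
From Stdlib Require Import Reals Lia Lra.

(* Taking H = G gives
   |G : G'| <= ab_1(G) =: m, and a subgroup of index k in G' has index at
   most m k in G, so ab_k(G') <= ab_(m k)(G).  Hence |G| = |G : G'| |G'| is
   bounded by m times the bound for G', whose derived length is one less. *)

Fixpoint order_bound (l : nat) (g : nat -> nat) : nat :=
  if l is l'.+1 then g 1 * order_bound l' (fun k => g (g 1 * k)) else 1.

Local Open Scope group_scope.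

Section AbelianizationGrowth.

Context {gT : finGroupType}.

Lemma derg_der1 (A : {set gT}) n : (A^`(1))^`(n) = A^`(n.+1).
Proof. by elim: n => [|n IHn] //; rewrite dergSn IHn. Qed.

Implicit Types G H K : {group gT}.

Lemma leq_ab_k G H k :
  H \subset G -> #|G : H| <= k -> #|H : H^`(1)| <= ab_k G k.
Proof.
move=> sHG iHG.
by apply: (@leq_bigmax_cond _ _ (fun K : {group gT} => #|K : K^`(1)|)); apply/andP.
Qed.

Lemma indexg_der1_leq_ab_1 G : (#|G : G^`(1)| <= ab_k G 1)%nat.
Proof. by apply: leq_ab_k; rewrite ?subxx ?indexgg. Qed.

Lemma ab_k_homo G : {homo ab_k G : k1 k2 / k1 <= k2}.
Proof.
move=> k1 k2 le_k12; apply/bigmax_leqP => H /andP [sHG iHG].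
exact: leq_ab_k (leq_trans iHG le_k12).
Qed.

Lemma ab_k_subgroup G H k :
  H \subset G -> (ab_k H k <= ab_k G (#|G : H| * k))%nat.
Proof.
move=> sHG; apply/bigmax_leqP => K /andP [sKH iKH].
apply: leq_ab_k; first exact: subset_trans sKH sHG.
by rewrite -(Lagrange_index sHG sKH) leq_mul.
Qed.

Lemma card_leq_order_bound l (g : nat -> nat) G :
  G^`(l) = 1 -> (forall k, 0 < k -> ab_k G k <= g k) ->
  #|G| <= order_bound l g.
Proof.
elim: l g G => [|l IHl] g G /=.
  by rewrite derg0 => -> _; rewrite cards1.
move=> derG abG; set m := (g 1)%nat.
have iGG' : #|G : G^`(1)| <= m.
  exact: leq_trans (indexg_der1_leq_ab_1 G) (abG 1%nat isT).
have m_gt0 : 0 < m by apply: leq_trans iGG'; apply: indexg_gt0.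
have cardG' : (#|G^`(1)%G| <= order_bound l (fun k => g (m * k)%nat))%nat.
  apply: IHl; first by rewrite /= derg_der1.
  move=> k k_gt0; apply: leq_trans (abG _ _); last by rewrite muln_gt0 m_gt0.
  apply: leq_trans (ab_k_subgroup _ _ k (der_sub 1 G)) _.
  by apply: ab_k_homo; rewrite leq_mul2r iGG' orbT.
by rewrite -(Lagrange (der_sub 1 G)) mulnC leq_mul.
Qed.

End AbelianizationGrowth.

Lemma leq_Z_to_nat_up (n : nat) (r : R) :
  (INR n <= r)%R -> n <= Z.to_nat (up r).
Proof.
move=> le_nr; apply/leP.
have [lt_r_up _] := archimed r.
have : (Z.of_nat n < up r)%Z by apply: lt_IZR; rewrite -INR_IZR_INZ; lra.
lia.
Qed.

Theorem mainTheorem4 :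
  forall (l : nat) (f : nat -> R), (1 <= l)%N ->
  exists F : R,
    forall (gT : finGroupType) (G : {group gT}),
      solvable G -> derived_length G l ->
      (forall k : nat, (1 <= k)%N -> (INR (ab_k G k) <= f k)%R) ->
      (INR #|G| <= F)%R.
Proof.
move=> l f _.
exists (INR (order_bound l (fun k => Z.to_nat (up (f k))))).
move=> gT G _ /andP [/eqP derG _] abG.
apply/le_INR/leP/card_leq_order_bound => // k k_gt0.
exact/leq_Z_to_nat_up/abG.
Qed.
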